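(* Let $G'$ be a finite loopless multigraph with edge multiplicity at most $2$ and maximum degree $\Delta>10^{20}$, let $H$ be the subgraph of $G'$ induced by the vertices of degree less than $\Delta/3$, and let $\sigma$ be a proper edge coloring of $G'$. Apply Phase I (defined in the context) to $\sigma$. Then for every two adjacent vertices $u,v\in V(G')\setminus V(H)$ with $\deg(u)=\deg(v)$, $$\Pr\big[u\notin L \ \text{ and } \ |S_{\sigma_1}(u)\,\triangle\, S_{\sigma_1}(v)|<10\big]<\frac{1}{\Delta^{7}}.$$
   Context: Phase I: (1) each edge $e\in E(G')\setminus E(H)$ is independently ''uncolored'' with probability $180/\Delta$; for a vertex $v$, $UC_v$ denotes the set of edges incident to $v$ that are uncolored in this step. (2) A vertex $v$ is recovered if $|UC_v|>290$; for every recovered vertex, all edges of $UC_v$ get back their color from $\sigma$. The resulting partial edge coloring is $\sigma_1$: an edge is uncolored in $\sigma_1$ iff it was uncolored in step (1) and neither endpoint is recovered; every other edge has its $\sigma$-color. $L$ is the set of vertices $v\in V(G')\setminus V(H)$ incident to fewer than $20$ edges uncolored in $\sigma_1$. For a partial coloring $c$, $S_c(v)$ is the set of colors on colored edges incident to $v$; $A\triangle B=(A\setminus B)\cup(B\setminus A)$. *)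

From mathcomp Require Import all_boot all_order all_algebra.
Set Implicit Arguments. Unset Strict Implicit. Unset Printing Implicit Defensive.
Import Order.TTheory GRing.Theory Num.Theory.

(* A finite multigraph: vertex type V, edge type E, each edge e has two
   endpoints src e and tgt e (the orientation is irrelevant). Parallel edges
   are distinct elements of E. *)
Section Multigraph.
Variables (V E : finType) (src tgt : E -> V).

Definition incident (e : E) (v : V) : bool := (src e == v) || (tgt e == v).

Definition deg (v : V) : nat := #|[set e | incident e v]|.

Definition maxdeg : nat := \max_(v : V) deg v.

Definition loopless : Prop := forall e, src e != tgt e.

Definition mult_le2 : Prop :=
  forall u v, u != v -> #|[set e | incident e u && incident e v]| <= 2.

Definition adjacent (u v : V) : bool :=
  [exists e, ((src e == u) && (tgt e == v)) || ((src e == v) && (tgt e == u))].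

Definition inH (v : V) : bool := 3 * deg v < maxdeg.

Definition edgeH (e : E) : bool := inH (src e) && inH (tgt e).

Definition proper_coloring (C : finType) (sigma : E -> C) : Prop :=
  forall e f v, e != f -> incident e v -> incident f v -> sigma e != sigma f.

(* edges eligible to be uncolored in step (1): E(G') \ E(H) *)
Definition candidates : {set E} := [set e | ~~ edgeH e].

(* U = set of edges uncolored in step (1) *)
Definition UC (U : {set E}) (v : V) : {set E} := [set e in U | incident e v].

Definition recovered (U : {set E}) (v : V) : bool := 290 < #|UC U v|.

(* edges uncolored in sigma_1 *)
Definition uncol1 (U : {set E}) : {set E} :=
  [set e in U | ~~ recovered U (src e) && ~~ recovered U (tgt e)].

Definition inL (U : {set E}) (v : V) : bool :=
  ~~ inH v && (#|[set e in uncol1 U | incident e v]| < 20).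

Definition Scol (C : finType) (sigma : E -> C) (U : {set E}) (v : V) : {set C} :=
  [set sigma e | e in [set e | incident e v && (e \notin uncol1 U)]].

Definition symdiff (T : finType) (A B : {set T}) : {set T} := (A :\: B) :|: (B :\: A).

(* Probability of an event under Phase I, step (1): every candidate edge is
   independently put in U with probability p. *)
Definition phaseI_prob (R : realFieldType) (p : R) (A : pred {set E}) : R :=
  \sum_(U : {set E} | (U \subset candidates) && A U)
     p ^+ #|U| * (1 - p) ^+ (#|candidates| - #|U|).

End Multigraph.

(* Since sigma is proper and deg u = deg v, the edges at u can be matched
   bijectively with the edges at v so that equally coloured edges are
   paired.  Suppose u has at least 20 edges left uncoloured by sigma_1.  If
   such an edge e is paired with an edge pi e that keeps its colour, then
   that colour lies in S(v) \ S(u), because e is the only edge at u carrying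
   it.  So when |S(u) (+) S(v)| < 10, at least 11 uncoloured edges at u have
   an uncoloured partner, and these 11 edges together with their partners
   were all uncoloured in step (1).  As u and v share at most 2 edges, these
   are at least 20 distinct edges, which happens with probability at most
   (180/D)^20.  A union bound over the C(D,11) <= D^11/11! choices of the 11
   edges gives at most 180^20 / (11! D^9) < D^-7. *)

From mathcomp Require Import all_boot all_order all_algebra.
From mathcomp Require Import zify ring.
Set Implicit Arguments. Unset Strict Implicit. Unset Printing Implicit Defensive.
Import Order.TTheory GRing.Theory Num.Theory.
Local Open Scope ring_scope.

Lemma exists_subset_card (T : finType) (A : {set T}) k :
  (k <= #|A|)%N -> exists2 S : {set T}, S \subset A & #|S| = k.
Proof.
case/card_geqP=> s [s_uniq s_size sA]; exists [set x in s].
  by apply/subsetP=> x; rewrite inE; exact: sA.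
by rewrite cardsE (card_uniqP s_uniq).
Qed.

Lemma card_le_injection (T : finType) (A B : {set T}) : (#|A| <= #|B|)%N ->
  exists g : T -> T, {in A, forall x, g x \in B} /\ {in A &, injective g}.
Proof.
move=> leAB.
have idx_lt x : x \in A -> (index x (enum A) < size (enum B))%N.
  by move=> xA; rewrite -cardE (leq_trans _ leAB) // cardE index_mem mem_enum.
exists (fun x => nth x (enum B) (index x (enum A))); split.
  by move=> x xA /=; rewrite -mem_enum mem_nth // idx_lt.
move=> x y xA yA /=.
rewrite (set_nth_default y x (idx_lt x xA)) => /eqP.
rewrite nth_uniq ?enum_uniq ?idx_lt // => /eqP eq_idx.
by rewrite -[x](nth_index x (s := enum A)) ?mem_enum // eq_idx nth_index ?mem_enum.
Qed.

Lemma imset_setI_preimset (T K : finType) (key : T -> K) (A B : {set T}) :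
  key @: (A :&: key @^-1: (key @: B)) = key @: A :&: key @: B.
Proof.
apply/setP=> c; rewrite inE; apply/imsetP/andP=> [[e] | [/imsetP[e eA ->] keB]].
  by rewrite !inE => /andP[eA keB] ->; rewrite imset_f.
by exists e; rewrite // !inE eA.
Qed.

Lemma exists_key_matching (T K : finType) (key : T -> K) (A B : {set T}) :
  #|A| = #|B| -> {in A &, injective key} -> {in B &, injective key} ->
  exists pi : T -> T, [/\ {in A, forall e, pi e \in B}, {in A &, injective pi} &
    {in A & B, forall e f, key f = key e -> pi e = f}].
Proof.
move=> eqAB keyA keyB.
pose A1 := A :&: key @^-1: (key @: B); pose B1 := B :&: key @^-1: (key @: A).
have eq_A1B1 : #|A1| = #|B1|.
  have injA1 : {in A1 &, injective key} by apply: sub_in2 keyA => e /setIP[].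
  have injB1 : {in B1 &, injective key} by apply: sub_in2 keyB => e /setIP[].
  rewrite -(card_in_imset injA1) -(card_in_imset injB1).
  by rewrite !imset_setI_preimset setIC.
have [g [gB g_inj]] : exists g : T -> T,
    {in A :\: A1, forall x, g x \in B :\: B1} /\ {in A :\: A1 &, injective g}.
  by apply: card_le_injection; rewrite !cardsDS ?subsetIl // eqAB eq_A1B1.
have unmatched e : e \in A ->
    (forall f, (f \in B) && (key f == key e) = false) -> e \in A :\: A1.
  move=> eA no_f; rewrite !inE eA andbT; apply/imsetP=> -[f fB kef].
  by have := no_f f; rewrite fB kef eqxx.
have matched e f : e \in A -> f \in B -> key f = key e -> f \in B1.
  by move=> eA fB kef; rewrite !inE fB kef imset_f.
exists (fun e => if [pick f in B | key f == key e] is Some f then f else g e).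
split.
- move=> e eA; case: pickP => [f /andP[] // | no_f].
  by have /setDP[] := gB e (unmatched e eA no_f).
- move=> e1 e2 e1A e2A.
  case: pickP => [f1 /andP[f1B /eqP k1] | no_f1];
    case: pickP => [f2 /andP[f2B /eqP k2] | no_f2].
  + by move=> eq_f; apply: keyA => //; rewrite -k1 -k2 eq_f.
  + move=> eq_f; have /setDP[_] := gB e2 (unmatched e2 e2A no_f2).
    by rewrite -eq_f (matched e1 f1).
  + move=> eq_f; have /setDP[_] := gB e1 (unmatched e1 e1A no_f1).
    by rewrite eq_f (matched e2 f2).
  + by apply: g_inj; apply: unmatched.
- move=> e f eA fB kfe; case: pickP => [f' /andP[f'B /eqP kf'] | no_f].
    by apply: keyB => //; rewrite kf' kfe.
  by have := no_f f; rewrite fB kfe eqxx.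
Qed.

(* A p-random subset U of K contains W with probability p^|W|: expand
   \prod_i (F i + G i) below. *)
Lemma sum_binomial_weights_superset (R : comPzRingType) (T : finType)
    (K W : {set T}) (p : R) :
  W \subset K ->
  \sum_(U : {set T} | (U \subset K) && (W \subset U))
     p ^+ #|U| * (1 - p) ^+ (#|K| - #|U|) = p ^+ #|W|.
Proof.
move=> WK.
pose F i := if i \in K then p else 0.
pose G i := if i \in W then 0 else if i \in K then 1 - p else 1.
have <- : \prod_i (F i + G i) = p ^+ #|W|.
  rewrite (eq_bigr (fun i => if i \in W then p else 1)) => [|i _].
    by rewrite -big_mkcond prodr_const.
  rewrite /F /G; case: (boolP (i \in W)) => iW.
    by rewrite (subsetP WK i iW) addr0.
  by case: (i \in K); [rewrite addrC subrK | rewrite add0r].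
rewrite bigA_distr big_mkcond /=; apply: eq_bigr => J _.
case: ifP => [/andP[JK WJ] | /negbT /nandP[/subsetPn[i iJ iK] | /subsetPn[i iW iJ]]].
- rewrite (bigID (mem J)) /= (eq_bigr (fun=> p)) => [|i iJ]; last first.
    by rewrite iJ /F (subsetP JK i iJ).
  rewrite prodr_const (eq_bigr (fun i => if i \in K then 1 - p else 1)) => [|i iJ].
    rewrite -big_mkcondr (eq_bigl (mem (K :\: J))) => [|i]; last by rewrite !inE.
    by rewrite prodr_const cardsD (setIidPr JK).
  by rewrite (negbTE iJ) /G ifN //; apply: contra iJ; exact: (subsetP WJ).
- by rewrite (bigD1 i) //= iJ /F (negbTE iK) mul0r.
- by rewrite (bigD1 i) //= (negbTE iJ) /G iW mul0r.
Qed.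

Section PhaseI.
Variables (V E C : finType) (src tgt : E -> V) (sigma : E -> C).

Definition edges_at (w : V) : {set E} := [set e | incident src tgt e w].

Definition uncolored_at (U : {set E}) (w : V) : {set E} :=
  [set e in uncol1 src tgt U | incident src tgt e w].

Lemma deg_le_maxdeg w : (deg src tgt w <= maxdeg src tgt)%N.
Proof. exact: (@leq_bigmax _ (fun w => deg src tgt w)). Qed.

Lemma adjacent_neq u v : loopless src tgt -> adjacent src tgt u v -> u != v.
Proof.
move=> loop_free; apply: contraTneq => <-; apply/existsPn => e.
rewrite orbb; apply/andP=> -[/eqP e_u /eqP e_u'].
by case/eqP: (loop_free e); rewrite e_u e_u'.
Qed.

Lemma proper_coloring_inj_at w :
  proper_coloring src tgt sigma -> {in edges_at w &, injective sigma}.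
Proof.
move=> proper e f; rewrite !inE => ew fw eq_col; apply/eqP/negPn/negP=> neq_ef.
by have := proper e f w neq_ef ew fw; rewrite eq_col eqxx.
Qed.

Lemma card_common_edges_le2 u v (A B : {set E}) :
  mult_le2 src tgt -> u != v -> A \subset edges_at u -> B \subset edges_at v ->
  (#|A :&: B| <= 2)%N.
Proof.
move=> mult2 neq_uv Au Bv; apply: leq_trans (mult2 u v neq_uv).
apply/subset_leq_card/subsetP=> e /setIP[/(subsetP Au) eu /(subsetP Bv) ev].
by move: eu ev; rewrite !inE => -> ->.
Qed.

Lemma phaseI_prob_union_bound (R : realFieldType) (p : R) (A : pred {set E})
    (I : finType) (F : {set I}) (W : I -> {set E}) k :
  0 <= p <= 1 ->
  (forall U, A U -> exists2 i, i \in F & W i \subset U) ->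
  {in F, forall i, k <= #|W i|}%N ->
  phaseI_prob src tgt p A <= p ^+ k *+ #|F|.
Proof.
case/andP=> p_ge0 p_le1 cover large.
set K := candidates src tgt.
pose w (U : {set E}) := p ^+ #|U| * (1 - p) ^+ (#|K| - #|U|).
have w_ge0 U : 0 <= w U by rewrite mulr_ge0 ?exprn_ge0 ?subr_ge0.
rewrite /phaseI_prob -/K.
apply: (@le_trans _ _ (\sum_(U : {set E} | U \subset K)
    \sum_(i in F) (if W i \subset U then w U else 0 : R))).
  rewrite [leRHS](bigID A) /= -[leLHS]addr0; apply: lerD.
    apply: ler_sum => U /andP[_ AU]; have [i iF WU] := cover U AU.
    by rewrite (bigD1 i) //= WU lerDl sumr_ge0 // => j _; case: ifP.
  by do 2![apply: sumr_ge0 => ? _]; case: ifP.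
rewrite exchange_big -sumr_const; apply: ler_sum => i iF; rewrite -big_mkcondr /=.
apply: le_trans (ler_wiXn2l p_ge0 p_le1 (large i iF)).
have [WK | notWK] := boolP (W i \subset K).
  by rewrite sum_binomial_weights_superset.
rewrite big_pred0 ?exprn_ge0 // => U; apply/negP => /andP[UK WU].
by case/negP: notWK; exact: subset_trans WU UK.
Qed.

Section Matching.
Variables (u v : V) (pi : E -> E).
Hypothesis proper : proper_coloring src tgt sigma.
Hypothesis pi_edges : {in edges_at u, forall e, pi e \in edges_at v}.
Hypothesis pi_inj : {in edges_at u &, injective pi}.
Hypothesis pi_color :
  {in edges_at u & edges_at v, forall e f, sigma f = sigma e -> pi e = f}.

Lemma card_matched_pairs (S : {set E}) :
  mult_le2 src tgt -> u != v -> S \subset edges_at u ->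
  (2 * #|S| - 2 <= #|S :|: pi @: S|)%N.
Proof.
move=> mult2 neq_uv Su.
have pi_injS : {in S &, injective pi} by apply: sub_in2 pi_inj; exact: subsetP.
have piSv : pi @: S \subset edges_at v.
  by apply/subsetP=> _ /imsetP[e eS ->]; apply/pi_edges/(subsetP Su).
have := card_common_edges_le2 mult2 neq_uv Su piSv.
by rewrite cardsU (card_in_imset pi_injS); lia.
Qed.

Lemma card_unmatched_uncolored_le_symdiff U :
  (#|uncolored_at U u :\: pi @^-1: uncolored_at U v|
     <= #|symdiff (Scol src tgt sigma U u) (Scol src tgt sigma U v)|)%N.
Proof.
set Bd := _ :\: _.
have Bd_u : Bd \subset edges_at u.
  by apply/subsetP=> e; rewrite !inE => /andP[_ /andP[]].
have col_inj : {in Bd &, injective (sigma \o pi)}.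
  move=> e f /(subsetP Bd_u) eu /(subsetP Bd_u) fu /= eq_col.
  by apply: pi_inj => //; apply: (proper_coloring_inj_at proper) => //; exact: pi_edges.
rewrite -(card_in_imset col_inj).
apply/subset_leq_card/subsetP=> _ /imsetP[e eBd ->] /=.
have eu := subsetP Bd_u e eBd; have piev := pi_edges eu.
move: eBd => /setDP[/setIdP[e_uncol _]]; rewrite inE => pie_colored.
(* the colour of pi e is used at v, but at u only by the uncoloured edge e *)
apply/setUP; right; apply/setDP; split.
  have piv : incident src tgt (pi e) v by move: piev; rewrite inE.
  apply/imsetP; exists (pi e) => //; rewrite inE piv /=.
  by apply: contra pie_colored => pie_uncol; apply/setIdP.
apply/imsetP=> -[f]; rewrite inE => /andP[f_at_u f_col] eq_col.
have fu : f \in edges_at u by rewrite inE.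
have fe : f = e by apply: pi_inj => //; apply: pi_color.
by rewrite fe e_uncol in f_col.
Qed.

Lemma phaseI_event_witness U :
  ~~ inH src tgt u -> ~~ inL src tgt U u ->
  (#|symdiff (Scol src tgt sigma U u) (Scol src tgt sigma U v)| < 10)%N ->
  exists2 S, S \in [set S : {set E} | S \subset edges_at u & #|S| == 11]
    & S :|: pi @: S \subset U.
Proof.
move=> uH uL small_symdiff.
have many : (20 <= #|uncolored_at U u|)%N by move: uL; rewrite /inL uH -leqNgt.
have := card_unmatched_uncolored_le_symdiff U.
have := cardsID (pi @^-1: uncolored_at U v) (uncolored_at U u).
set paired := _ :&: _ => card_split few_bad.
have [S S_paired cardS] := @exists_subset_card _ paired 11 ltac:(lia).
have uncol_U w : uncolored_at U w \subset U.
  by apply/subsetP=> e; rewrite !inE => /andP[/andP[]].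
exists S.
  rewrite inE cardS eqxx andbT; apply/subsetP=> e /(subsetP S_paired).
  by rewrite !inE => /andP[/andP[]].
rewrite subUset; apply/andP; split.
  by apply: subset_trans (subset_trans S_paired (subsetIl _ _)) (uncol_U u).
apply/subsetP=> _ /imsetP[e eS ->]; apply: (subsetP (uncol_U v)).
by have /setIP[_] := subsetP S_paired e eS; rewrite inE.
Qed.

End Matching.

End PhaseI.

Lemma ffact_leq_expn n m : (n ^_ m <= n ^ m)%N.
Proof.
rewrite ffact_prod -[in (n ^ m)%N](card_ord m) -prod_nat_const.
by apply: leq_prod => i _; exact: leq_subr.
Qed.

Lemma expn180_lt_fact11 D : (10 ^ 20 < D)%N -> (180 ^ 20 < 11`! * D ^ 2)%N.
Proof.
have bound : (180 ^ 20 < 11`! * (10 ^ 20) ^ 2)%N.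
  by rewrite !factS fact0; Zify.zify; reflexivity.
(* keep the large constants opaque so that they are never unfolded in unary *)
move: (10 ^ 20)%N (180 ^ 20)%N (11`!) bound => t a f bound ltD.
by apply: (leq_trans bound); rewrite leq_mul2l leq_exp2r // ltnW ?orbT.
Qed.

Lemma expn180_mul_lt D N : (10 ^ 20 < D)%N -> (N * 11`! <= D ^ 11)%N ->
  (N * 180 ^ 20 * D ^ 7 < D ^ 20)%N.
Proof.
move=> D_big.
have D_pow k : (0 < D ^ k)%N by rewrite expn_gt0 (leq_ltn_trans _ D_big).
move: (expn180_lt_fact11 D_big) (fact_gt0 11).
move: (11`!) (180 ^ 20)%N => f a a_lt f_gt0 N_le.
have -> : (D ^ 20 = D ^ 11 * D ^ 2 * D ^ 7)%N by rewrite -!expnD.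
rewrite -(ltn_pmul2r f_gt0).
have h1 : (N * f * a * D ^ 7 <= D ^ 11 * a * D ^ 7)%N by rewrite !leq_mul2r N_le !orbT.
have h2 : (D ^ 11 * a * D ^ 7 < D ^ 11 * (f * D ^ 2) * D ^ 7)%N.
  by rewrite ltn_pmul2r // ltn_pmul2l.
by move: (D ^ 11)%N (D ^ 2)%N (D ^ 7)%N h1 h2 => x y z; lia.
Qed.

Lemma union_bound_numeric (R : realFieldType) (D N : nat) :
  (10 ^ 20 < D)%N -> (N * 11`! <= D ^ 11)%N ->
  (180 / D%:R : R) ^+ 20 *+ N < 1 / D%:R ^+ 7.
Proof.
move=> D_big /(expn180_mul_lt D_big) nat_lt.
have D_gt0 : (0 < D)%N by apply: leq_ltn_trans D_big.
have D_neq0 : D%:R != 0 :> R by rewrite pnatr_eq0 -lt0n.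
have -> : (180 / D%:R : R) ^+ 20 *+ N = N%:R * 180 ^+ 20 * D%:R ^+ 7 / D%:R ^+ 27.
  by field.
have -> : 1 / D%:R ^+ 7 = D%:R ^+ 20 / D%:R ^+ 27 :> R by field.
rewrite ltr_pM2r ?invr_gt0 ?exprn_gt0 ?ltr0n //.
by rewrite -!natrX -!natrM ltr_nat.
Qed.

Unset Implicit Arguments.

Theorem lemma3 (R : realFieldType) (V E C : finType) (src tgt : E -> V)
    (sigma : E -> C) :
  loopless src tgt ->
  mult_le2 src tgt ->
  (10 ^ 20 < maxdeg src tgt)%N ->
  proper_coloring src tgt sigma ->
  forall u v : V,
    ~~ inH src tgt u -> ~~ inH src tgt v ->
    adjacent src tgt u v ->
    deg src tgt u = deg src tgt v ->
    phaseI_prob src tgt (180 / (maxdeg src tgt)%:R : R)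
      (fun U => ~~ inL src tgt U u &&
                (#|symdiff (Scol src tgt sigma U u) (Scol src tgt sigma U v)| < 10)%N)
    < 1 / ((maxdeg src tgt)%:R ^+ 7).
Proof.
move=> loop_free mult2 D_big proper u v uH _ adj_uv deg_uv.
have neq_uv := adjacent_neq loop_free adj_uv.
have [pi [pi_edges pi_inj pi_color]] := exists_key_matching deg_uv
  (proper_coloring_inj_at (w := u) proper) (proper_coloring_inj_at (w := v) proper).
set D := maxdeg src tgt in D_big *.
have D_ge180 : (180 <= D)%N by apply: leq_trans (ltnW D_big).
apply: le_lt_trans (union_bound_numeric R D_big _).
apply: (phaseI_prob_union_bound src tgt
  (F := [set S : {set E} | S \subset edges_at src tgt u & #|S| == 11])
  (W := fun S => S :|: pi @: S)).
- rewrite divr_ge0 ?ler0n //= ler_pdivrMr ?ltr0n ?mul1r ?ler_nat //.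
  exact: leq_trans D_ge180.
- move=> U /andP[uL small].
  exact: phaseI_event_witness proper pi_edges pi_inj pi_color _ uH uL small.
- move=> S; rewrite inE => /andP[Su /eqP cardS].
  by have := card_matched_pairs pi_edges pi_inj mult2 neq_uv Su; rewrite cardS.
rewrite cards_draws bin_ffact; apply: leq_trans (ffact_leq_expn _ _) _.
by rewrite leq_exp2r // deg_le_maxdeg.
Qed.
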